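(* Let $n\ge 2$, $m\ge 1$, and let $T_{ij}\in\mathbb R^{m\times m}$ ($i,j\in\{1,\dots,n\}$) be similarity matrices with $T_{ij}=T_{ji}^\top$. Suppose that for every pair $i,j$ the maximization $\max_{P\in\mathcal P_m}\operatorname{tr}(P^\top T_{ij})$ has a unique maximizer $P_{ij}\in\mathcal P_m$, and that these maximizers are consistent: $P_{ij}P_{jk}=P_{ik}$ for all $i,j,k\in\{1,\dots,n\}$. Then Algorithm 1 (run with any Maximum Spanning Tree, any processing order of its edges, any initial permutation matrices, and any sequence of coordinate updates) outputs permutation matrices $A_1,\dots,A_n$ that attain the maximum in $$\max_{A_1,\dots,A_n\in\mathcal P_m}\ \mathcal L(A_1,\dots,A_n):=\sum_{i=1}^n\sum_{j=1}^n\operatorname{tr}(A_iT_{ij}A_j^\top).$$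
   Context: $\mathcal P_m$ denotes the set of $m\times m$ permutation matrices. Define $f(T_{ij}):=\max_{P\in\mathcal P_m}\operatorname{tr}(P^\top T_{ij})$. Algorithm 1 (input: $T_{ij}$ for $i,j\in\{1,\dots,n\}$): (1) Form the complete undirected graph $G$ on vertices $v_1,\dots,v_n$ where edge $(v_i,v_j)$, $i\ne j$, has weight $f(T_{ij})$, and compute a Maximum Spanning Tree with edge set $E'$. (2) Set $S_i\leftarrow\{v_i\}$ for each $i$ and initialize each $A_i$ to an arbitrary element of $\mathcal P_m$. (3) For each edge $(v_i,v_j)\in E'$ (in some order): compute $\hat P=\arg\max_{P\in\mathcal P_m}\operatorname{tr}(P^\top A_iT_{ij}A_j^\top)$; set $A_{j'}\leftarrow \hat P A_{j'}$ for every $v_{j'}\in S_j$; let $S'=S_i\cup S_j$ and set $S_k\leftarrow S'$ for every $v_k\in S'$. (4) Coordinate updates: repeatedly pick $i\in\{1,\dots,n\}$ and replace $A_i$ by a maximizer $\arg\max_{A\in\mathcal P_m}\operatorname{tr}\big(A^\top\sum_{j\ne i}A_jT_{ij}\big)$, until convergence. *)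

From HB Require Import structures.
From mathcomp Require Import all_boot all_order all_algebra all_fingroup.
Set Implicit Arguments. Unset Strict Implicit. Unset Printing Implicit Defensive.
Import Order.TTheory GRing.Theory Num.Theory.
Local Open Scope ring_scope.

(* The set P_m of m x m permutation matrices is { perm_mx s | s : 'S_m }. *)

Definition is_argmax_perm (R : realFieldType) (m : nat) (M : 'M[R]_m) (s : 'S_m) : Prop :=
  forall s' : 'S_m, \tr ((perm_mx s')^T *m M) <= \tr ((perm_mx s)^T *m M).

(* f(M) = max_{P in P_m} tr(P^T M)  (the big max is seeded with one of its own terms) *)
Definition fval (R : realFieldType) (m : nat) (M : 'M[R]_m) : R :=
  \big[Num.max/ \tr ((perm_mx (1 : 'S_m))^T *m M)]_(s : 'S_m) \tr ((perm_mx s)^T *m M).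

Definition edge_rel (n : nat) (E : seq ('I_n * 'I_n)) : rel 'I_n :=
  fun x y => ((x, y) \in E) || ((y, x) \in E).

Definition spanning_tree (n : nat) (E : seq ('I_n * 'I_n)) : Prop :=
  [/\ size E = n.-1, all (fun e => e.1 != e.2) E
    & forall x y : 'I_n, connect (edge_rel E) x y].

Definition tree_weight (R : realFieldType) (n m : nat)
  (T : 'I_n -> 'I_n -> 'M[R]_m) (E : seq ('I_n * 'I_n)) : R :=
  \sum_(e <- E) fval (T e.1 e.2).

Definition max_spanning_tree (R : realFieldType) (n m : nat)
  (T : 'I_n -> 'I_n -> 'M[R]_m) (E : seq ('I_n * 'I_n)) : Prop :=
  spanning_tree E /\
  forall E', spanning_tree E' -> tree_weight T E' <= tree_weight T E.

(* Step (3) for one edge (v_i, v_j): state (A, S) -> (A', S'). *)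
Definition merge_step (R : realFieldType) (n m : nat) (T : 'I_n -> 'I_n -> 'M[R]_m)
  (A : 'I_n -> 'M[R]_m) (S : 'I_n -> {set 'I_n}) (e : 'I_n * 'I_n)
  (A' : 'I_n -> 'M[R]_m) (S' : 'I_n -> {set 'I_n}) : Prop :=
  let i := e.1 in let j := e.2 in
  exists s : 'S_m,
    is_argmax_perm (A i *m T i j *m (A j)^T) s /\
    (forall k, A' k = if k \in S j then perm_mx s *m A k else A k) /\
    (forall k, S' k = if k \in S i :|: S j then S i :|: S j else S k).

Fixpoint merge_run (R : realFieldType) (n m : nat) (T : 'I_n -> 'I_n -> 'M[R]_m)
  (A : 'I_n -> 'M[R]_m) (S : 'I_n -> {set 'I_n}) (E : seq ('I_n * 'I_n))
  (A' : 'I_n -> 'M[R]_m) : Prop :=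
  match E with
  | [::] => forall k, A' k = A k
  | e :: E1 => exists A1 S1, merge_step T A S e A1 S1 /\ merge_run T A1 S1 E1 A'
  end.

(* Step (4), one coordinate update at index i:
   A_i <- argmax_{A in P_m} tr(A^T sum_{j<>i} A_j T_ji)
   (the block-coordinate maximization of L). *)
Definition coord_step (R : realFieldType) (n m : nat) (T : 'I_n -> 'I_n -> 'M[R]_m)
  (A : 'I_n -> 'M[R]_m) (i : 'I_n) (A' : 'I_n -> 'M[R]_m) : Prop :=
  exists s : 'S_m,
    is_argmax_perm (\sum_(j < n | j != i) A j *m T j i) s /\
    A' i = perm_mx s /\ (forall k, k != i -> A' k = A k).

Fixpoint coord_run (R : realFieldType) (n m : nat) (T : 'I_n -> 'I_n -> 'M[R]_m)
  (A : 'I_n -> 'M[R]_m) (idx : seq 'I_n) (A' : 'I_n -> 'M[R]_m) : Prop :=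
  match idx with
  | [::] => forall k, A' k = A k
  | i :: idx1 => exists A1, coord_step T A i A1 /\ coord_run T A1 idx1 A'
  end.

(* A is a possible output of Algorithm 1 (any MST, any edge order/orientation,
   any initial permutation matrices, any argmax choices, any finite sequence of
   coordinate updates). *)
Definition algorithm1_output (R : realFieldType) (n m : nat)
  (T : 'I_n -> 'I_n -> 'M[R]_m) (A : 'I_n -> 'M[R]_m) : Prop :=
  exists (E : seq ('I_n * 'I_n)) (A0 Amid : 'I_n -> 'M[R]_m) (idx : seq 'I_n),
    [/\ max_spanning_tree T E, (forall i, is_perm_mx (A0 i)),
        merge_run T A0 (fun i => [set i]) E Amid & coord_run T Amid idx A].

Definition Lval (R : realFieldType) (n m : nat) (T : 'I_n -> 'I_n -> 'M[R]_m)
  (A : 'I_n -> 'M[R]_m) : R :=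
  \sum_(i < n) \sum_(j < n) \tr (A i *m T i j *m (A j)^T).

From HB Require Import structures.
From mathcomp Require Import all_boot all_order all_algebra all_fingroup.
Import Order.TTheory GRing.Theory Num.Theory.
Local Open Scope ring_scope.
Set Implicit Arguments. Unset Strict Implicit. Unset Printing Implicit Defensive.

(* Write A_k = perm_mx (al k). Consistency makes the maximizers a cocycle, and
   step (3) keeps every merged component "aligned": al b = al a * P_ab whenever
   a and b lie in the same component. Only the connectivity of the tree matters: once all vertices are merged,
   al b = al a * P_ab for all a, b. Then in the objective of a coordinate update
   at i every summand tr(A^T A_j T_ji) is maximized by A = A_i, and uniqueness of
   the maximizer of T_ji forces the update to return A_i again; so step (4)
   changes nothing. Finally each term tr(A_i T_ij A_j^T) of L equals
   f(T_ij), its largest possible value. *)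

Lemma perm_mx_inj (R : realFieldType) m : injective (@perm_mx R m).
Proof.
move=> s t Est; apply/permP=> i.
have := congr1 (fun M : 'M[R]_m => M i (s i)) Est.
rewrite /perm_mx !mxE eqxx.
by case: eqP => // _ /eqP; rewrite oner_eq0.
Qed.

Definition perm_score (R : realFieldType) m (M : 'M[R]_m) (s : 'S_m) : R :=
  \tr ((perm_mx s)^T *m M).

Section PermScore.
Variables (R : realFieldType) (m : nat).
Implicit Types (M : 'M[R]_m) (s x y : 'S_m).

Lemma perm_score_conj M x y s :
  perm_score (perm_mx x *m M *m (perm_mx y)^T) s = perm_score M (x^-1 * s * y).
Proof.
rewrite /perm_score !tr_perm_mx mulmxA mxtrace_mulC !mulmxA -!perm_mxM.
by rewrite !invMg invgK !mulgA.
Qed.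

Lemma perm_score_mull M x s :
  perm_score (perm_mx x *m M) s = perm_score M (x^-1 * s).
Proof. by have := perm_score_conj M x 1 s; rewrite perm_mx1 trmx1 mulmx1 mulg1. Qed.

Lemma mxtrace_perm_score M : \tr M = perm_score M 1.
Proof. by rewrite /perm_score perm_mx1 trmx1 mul1mx. Qed.

Lemma perm_score_sum n (F : 'I_n -> 'M[R]_m) (Q : pred 'I_n) s :
  perm_score (\sum_(j | Q j) F j) s = \sum_(j | Q j) perm_score (F j) s.
Proof. by rewrite /perm_score mulmx_sumr raddf_sum. Qed.

Lemma is_argmax_perm_conj M x y s :
  is_argmax_perm (perm_mx x *m M *m (perm_mx y)^T) s ->
  is_argmax_perm M (x^-1 * s * y).
Proof.
move=> smax t; have := smax (x * t * y^-1)%g.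
by rewrite -/(perm_score _ _) -/(perm_score _ _) !perm_score_conj !mulgA mulVg mul1g mulgKV.
Qed.

End PermScore.

Lemma ler_sum_common_argmax (R : realDomainType) (I : finType) (Q : pred I)
    (X : Type) (F : I -> X -> R) (x y : X) :
  (forall i, Q i -> forall z, F i z <= F i x) ->
  \sum_(i | Q i) F i x <= \sum_(i | Q i) F i y ->
  forall i, Q i -> F i x <= F i y.
Proof.
move=> xmax + i Qi; rewrite (bigD1 i) // [leRHS](bigD1 i) //= => ysum.
rewrite -(lerD2r (\sum_(j | Q j && (j != i)) F j x)); apply: le_trans ysum _.
by rewrite lerD2l; apply: ler_sum => j /andP[Qj _]; apply: xmax.
Qed.

Section Blocks.
Variable n : nat.
Implicit Types (S : 'I_n -> {set 'I_n}) (a b i j k x y : 'I_n).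

Definition blocks S := (forall k, k \in S k) /\ (forall k a, a \in S k -> S a = S k).

Lemma eq_blocks S S' : S =1 S' -> blocks S -> blocks S'.
Proof.
by move=> eqS [Sk_k Sclosed]; split=> [k | k a]; rewrite -!eqS; [apply: Sk_k | apply: Sclosed].
Qed.

Definition join_blocks S i j k : {set 'I_n} :=
  if k \in S i :|: S j then S i :|: S j else S k.

Lemma block_mem_eq S a x y : blocks S -> a \in S x -> (a \in S y) = (x \in S y).
Proof.
move=> [Sk_k Sclosed] ax; apply/idP/idP => [ay|xy].
  by rewrite -(Sclosed _ _ ay) (Sclosed _ _ ax).
by rewrite -(Sclosed _ _ xy).
Qed.

Lemma join_blocks_mem S i j a x : blocks S -> a \in S x ->
  (a \in S i :|: S j) = (x \in S i :|: S j).
Proof. by move=> Sb ax; rewrite !inE !(block_mem_eq _ Sb ax). Qed.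

Lemma blocks_join S i j : blocks S -> blocks (join_blocks S i j).
Proof.
move=> Sb; have [Sk_k Sclosed] := Sb; rewrite /join_blocks.
split=> [k | k a]; first by case: ifP.
case: ifP => [kU aU | kU ak]; first by rewrite aU.
by rewrite (join_blocks_mem _ _ Sb ak) kU; apply: Sclosed.
Qed.

Lemma sub_join_blocks S i j k : blocks S -> S k \subset join_blocks S i j k.
Proof.
move=> Sb; rewrite /join_blocks; case: ifP => // kU.
by apply/subsetP => a ak; rewrite (join_blocks_mem _ _ Sb ak).
Qed.

Lemma join_blocks_edge S i j : blocks S -> j \in join_blocks S i j i.
Proof. by move=> [Sk_k _]; rewrite /join_blocks inE Sk_k /= inE Sk_k orbT. Qed.

Lemma connect_blocks S (E : seq ('I_n * 'I_n)) : blocks S ->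
  (forall e, e \in E -> e.2 \in S e.1) ->
  forall x y, connect (edge_rel E) x y -> y \in S x.
Proof.
move=> [Sk_k Sclosed] Eblock x y /connectP[p xp ->] {y}.
elim: p x xp => [|z p IHp] x /=; first by rewrite Sk_k.
case/andP => xz zp; have zx : z \in S x.
  case/orP: xz => [/Eblock // | /Eblock /= xz].
  by rewrite (Sclosed _ _ xz) Sk_k.
by rewrite -(Sclosed _ _ zx); apply: IHp.
Qed.

End Blocks.

Section Synchronization.
Variables (R : realFieldType) (n m : nat) (T : 'I_n -> 'I_n -> 'M[R]_m).
Variable P : 'I_n -> 'I_n -> 'S_m.
Hypothesis P_argmax : forall i j s, is_argmax_perm (T i j) s <-> s = P i j.
Hypothesis P_cocycle : forall i j k, (P i j * P j k)%g = P i k.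
Implicit Types (S : 'I_n -> {set 'I_n}) (al : 'I_n -> 'S_m) (A : 'I_n -> 'M[R]_m).

Lemma is_argmax_P i j : is_argmax_perm (T i j) (P i j).
Proof. exact/P_argmax. Qed.

Lemma P_id i : P i i = 1%g.
Proof. by apply: (mulgI (P i i)); rewrite mulg1 P_cocycle. Qed.

Definition aligned S al := forall a b, b \in S a -> al b = (al a * P a b)%g.

Definition merge_invariant A S :=
  blocks S /\ exists2 al, (forall k, A k = perm_mx (al k)) & aligned S al.

Lemma aligned_join S al i j (s : 'S_m) : blocks S -> aligned S al ->
  (s * al j = al i * P i j)%g ->
  aligned (join_blocks S i j) (fun k => if k \in S j then s * al k else al k)%g.
Proof.
move=> Sb al_ok s_ok; set al' := fun k => _.
have from_i k : k \in S i :|: S j -> al' k = (al i * P i k)%g.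
  rewrite /al' inE; case: ifP => [kj _ | _ /orP[ki | //]].
    by rewrite (al_ok j k) // mulgA s_ok -mulgA P_cocycle.
  exact: al_ok.
move=> a b; rewrite /join_blocks; case: ifP => [aU bU | aU ba].
  by rewrite !from_i // -mulgA P_cocycle.
have := join_blocks_mem i j Sb ba; rewrite aU => bU.
move: aU bU; rewrite !inE => /norP[_ aj] /norP[_ bj].
by rewrite /al' (negbTE aj) (negbTE bj); apply: al_ok.
Qed.

Lemma merge_step_invariant A S e A' S' :
  merge_step T A S e A' S' -> merge_invariant A S ->
  [/\ merge_invariant A' S', forall k, S k \subset S' k & e.2 \in S' e.1].
Proof.
case: e => i j /= [s [smax [A'_def S'_def]]] [Sb [al A_al al_ok]].
have S'_join k : S' k = join_blocks S i j k by rewrite S'_def.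
have s_ok : (s * al j = al i * P i j)%g.
  rewrite !A_al in smax; have /P_argmax <- := is_argmax_perm_conj smax.
  by rewrite -!mulgA mulKVg.
split; first split.
- by apply: (eq_blocks (fun k => esym (S'_join k))); apply: blocks_join.
- exists (fun k => if k \in S j then s * al k else al k)%g.
    by move=> k; rewrite A'_def A_al; case: ifP; rewrite ?perm_mxM.
  by move=> a b; rewrite !S'_join; apply: aligned_join.
- by move=> k; rewrite S'_join sub_join_blocks.
- by rewrite S'_join join_blocks_edge.
Qed.

Lemma merge_run_invariant A S E A' :
  merge_run T A S E A' -> merge_invariant A S ->
  exists S', [/\ merge_invariant A' S', forall k, S k \subset S' k
               & forall e, e \in E -> e.2 \in S' e.1].
Proof.
elim: E A S => [|e E IHE] A S /=.
  move=> A'_A [Sb [al A_al al_ok]]; exists S; split=> //.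
  by split=> //; exists al => // k; rewrite A'_A.
move=> [A1 [S1 [step run]]] inv.
have [inv1 sub1 e_in1] := merge_step_invariant step inv.
have [S' [inv' sub' E_in']] := IHE _ _ run inv1.
exists S'; split=> // [k | e0]; first exact: subset_trans (sub1 k) (sub' k).
rewrite inE => /orP[/eqP -> | ]; last exact: E_in'.
exact: subsetP (sub' _) _ e_in1.
Qed.

Definition synchronized al := forall a b, al b = (al a * P a b)%g.

Lemma merge_run_synchronized A E A' :
  (forall x y, connect (edge_rel E) x y) -> (forall k, is_perm_mx (A k)) ->
  merge_run T A (fun k => [set k]) E A' ->
  exists2 al, forall k, A' k = perm_mx (al k) & synchronized al.
Proof.
move=> E_conn A_perm run.
have /fin_all_exists[al0 A_al0] : forall k, exists s : 'S_m, A k = perm_mx s.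
  by move=> k; apply/is_perm_mxP.
have inv0 : merge_invariant A (fun k => [set k]).
  split; first by split=> [k | k a /set1P ->]; rewrite ?set11.
  by exists al0 => // a b /set1P ->; rewrite P_id mulg1.
have [S' [[S'b [al A'_al al_ok]] _ E_in]] := merge_run_invariant run inv0.
by exists al => // a b; apply/al_ok/(connect_blocks S'b E_in).
Qed.

Lemma coord_step_synchronized al A i A' : (1 < n)%N -> synchronized al ->
  (forall k, A k = perm_mx (al k)) -> coord_step T A i A' ->
  forall k, A' k = perm_mx (al k).
Proof.
move=> n_gt1 sync A_al [s [smax [A'_i A'_k]]].
pose F j t := perm_score (T j i) ((al j)^-1 * t).
have score t : perm_score (\sum_(j | j != i) A j *m T j i) t =
               \sum_(j | j != i) F j t.
  by rewrite perm_score_sum; apply: eq_bigr => j _; rewrite A_al perm_score_mull.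
have al_i_max j t : perm_score (T j i) t <= F j (al i).
  by rewrite /F (sync j i) mulKg; apply: is_argmax_P.
have [j0 j0_i] : exists j0, j0 != i.
  have n1_gt0 : (0 < n.-1)%N by rewrite -ltnS prednK // ltnW.
  by exists (lift i (Ordinal n1_gt0)); rewrite eq_sym neq_lift.
have F_j0 : F j0 (al i) <= F j0 s.
  apply: (ler_sum_common_argmax (Q := fun j => j != i)) j0_i.
    by move=> j _ t; apply: al_i_max.
  by rewrite -!score; apply: smax.
have /P_argmax s_j0 : is_argmax_perm (T j0 i) ((al j0)^-1 * s).
  by move=> t; apply: le_trans (al_i_max j0 t) F_j0.
have s_al : s = al i by rewrite (sync j0 i) -s_j0 mulKVg.
move=> k; case: (eqVneq k i) => [-> | k_i]; first by rewrite A'_i s_al.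
by rewrite A'_k.
Qed.

Lemma coord_run_synchronized al A idx A' : (1 < n)%N -> synchronized al ->
  (forall k, A k = perm_mx (al k)) -> coord_run T A idx A' ->
  forall k, A' k = perm_mx (al k).
Proof.
move=> n_gt1 sync; elim: idx A => [|i idx IHidx] A A_al /=.
  by move=> A'_A k; rewrite A'_A.
by move=> [A1 [step run]]; apply: IHidx run; apply: coord_step_synchronized step.
Qed.

Lemma Lval_synchronized_max al (B : 'I_n -> 'S_m) : synchronized al ->
  Lval T (fun k => perm_mx (B k)) <= Lval T (fun k => perm_mx (al k)).
Proof.
move=> sync; apply: ler_sum => i _; apply: ler_sum => j _.
rewrite !mxtrace_perm_score !perm_score_conj !mulg1 (sync i j) mulKg.
exact: is_argmax_P.
Qed.

End Synchronization.

Theorem theorem1 (R : realFieldType) (n m : nat)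
  (T : 'I_n -> 'I_n -> 'M[R]_m) (P : 'I_n -> 'I_n -> 'S_m) :
  (2 <= n)%N -> (1 <= m)%N ->
  (forall i j, T i j = (T j i)^T) ->
  (forall i j (s : 'S_m), is_argmax_perm (T i j) s <-> s = P i j) ->
  (forall i j k, (perm_mx (P i j) : 'M[R]_m) *m perm_mx (P j k) = perm_mx (P i k)) ->
  forall A : 'I_n -> 'M[R]_m, algorithm1_output T A ->
  (forall i, is_perm_mx (A i)) /\
  (forall B : 'I_n -> 'S_m, Lval T (fun i => perm_mx (B i)) <= Lval T A).
Proof.
move=> n_gt1 _ _ P_argmax P_consistent A [E [A0 [Amid [idx [[[_ _ E_conn] _]]]]]].
move=> A0_perm merge coord.
have P_cocycle i j k : (P i j * P j k)%g = P i k.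
  by apply: (@perm_mx_inj R); rewrite perm_mxM.
have [al Amid_al sync] := merge_run_synchronized P_argmax P_cocycle E_conn A0_perm merge.
have A_al := coord_run_synchronized P_argmax n_gt1 sync Amid_al coord.
split=> [i | B]; first by rewrite A_al perm_mx_is_perm.
have -> : Lval T A = Lval T (fun k => perm_mx (al k)).
  by apply: eq_bigr => i _; apply: eq_bigr => j _; rewrite !A_al.
exact: Lval_synchronized_max.
Qed.
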